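(* There is no equilateral hyperbolic Heron triangle.
   Context: All triangles are non-degenerate, bounded triangles in the hyperbolic plane (curvature $-1$), with side lengths $a,b,c>0$, opposite angles $\alpha,\beta,\gamma>0$, and area $A=\pi-\alpha-\beta-\gamma$. A hyperbolic Heron triangle is one with $e^a,e^b,e^c\in\mathbb{Q}$ and $e^{i\alpha},e^{i\beta},e^{i\gamma},e^{iA}\in\mathbb{Q}[i]$. *)

(* concrete reals R. Hyperbolic plane = hyperboloid model
   H^2 = { p in R^3 | p1^2 + p2^2 - p3^2 = -1, p3 > 0 } with Minkowski form. *)
From Stdlib Require Import Reals QArith.
Open Scope R_scope.

Record pt3 := P3 { px : R; py : R; pz : R }.

Definition mink (p q : pt3) : R := px p * px q + py p * py q - pz p * pz q.

Definition on_hyperboloid (p : pt3) : Prop := mink p p = -1 /\ 0 < pz p.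

Definition arcosh (t : R) : R := ln (t + sqrt (t * t - 1)).

(* hyperbolic distance: cosh d(p,q) = - <p,q> *)
Definition hdist (p q : pt3) : R := arcosh (- mink p q).

(* unit-free tangent vector at p pointing towards q: projection of q onto T_p H^2 *)
Definition tangent (p q : pt3) : pt3 :=
  P3 (px q + mink p q * px p) (py q + mink p q * py p) (pz q + mink p q * pz p).

Definition hangle (p q r : pt3) : R :=
  let u := tangent p q in let v := tangent p r in
  acos (mink u v / (sqrt (mink u u) * sqrt (mink v v))).

(* non-degenerate: the three vertices do not lie on a common geodesic, i.e.
   (geodesics being the traces of 2-planes through 0) are linearly independent *)
Definition det3 (a b c : pt3) : R :=
  px a * (py b * pz c - pz b * py c)
  - py a * (px b * pz c - pz b * px c)
  + pz a * (px b * py c - py b * px c).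

Definition nondegenerate (a b c : pt3) : Prop := det3 a b c <> 0.

Definition is_rat (x : R) : Prop := exists q : Q, x = Q2R q.

(* e^{i t} in Q[i] *)
Definition unit_gauss (t : R) : Prop := is_rat (cos t) /\ is_rat (sin t).

Definition heron_triangle (A B C : pt3) : Prop :=
  let a := hdist B C in let b := hdist C A in let c := hdist A B in
  let al := hangle A B C in let be := hangle B C A in let ga := hangle C A B in
  is_rat (exp a) /\ is_rat (exp b) /\ is_rat (exp c) /\
  unit_gauss al /\ unit_gauss be /\ unit_gauss ga /\
  unit_gauss (PI - al - be - ga).

Definition equilateral (A B C : pt3) : Prop :=
  hdist B C = hdist C A /\ hdist C A = hdist A B.

From Stdlib Require Import Reals QArith ZArith Lra Psatz.
From mathcomp Require Import all_boot zify.

(* Let the common side be a and E = e^a (rational by assumption).  In the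
   hyperboloid model cosh a = -<A, B> = (E + 1/E)/2 =: c for all three pairs of
   vertices, non-degeneracy forces c > 1, and the angle at a vertex satisfies
   cos alpha = c / (c + 1), whence
       sin^2 alpha * (E + 1)^4 = 4 E (E^2 + E + 1).
   If E = P/Q and sin alpha were rational, P Q (P^2 + P Q + Q^2) would be the
   square of a rational, hence of an integer.  After dividing by gcd(P, Q)
   this makes P, Q and P^2 + P Q + Q^2 squares, i.e. gives a solution of
   u^4 + u^2 v^2 + v^4 = w^2 in coprime positive integers, which is excluded
   by Fermat-style infinite descent. *)

Open Scope nat_scope.
Set Implicit Arguments. Unset Strict Implicit.

Section CoprimeSquares.

Lemma gcdn_coprime_split p q : 0 < gcdn p q ->
  exists p' q', [/\ p = p' * gcdn p q, q = q' * gcdn p q & coprime p' q'].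
Proof.
move=> gpos; set g := gcdn p q.
have ep : p = p %/ g * g by rewrite divnK // dvdn_gcdl.
have eq : q = q %/ g * g by rewrite divnK // dvdn_gcdr.
exists (p %/ g), (q %/ g); split => //.
by rewrite /coprime -(eqn_pmul2r gpos) mul1n muln_gcdl -ep -eq.
Qed.

Lemma gcdn_sqr a b : gcdn (a ^ 2) (b ^ 2) = gcdn a b ^ 2.
Proof.
have [g0|gpos] := posnP (gcdn a b).
  by move/eqP: g0; rewrite eqn0Ngt gcdn_gt0 negb_or -!eqn0Ngt => /andP[/eqP-> /eqP->].
have [a' [b' [ea eb cab]]] := gcdn_coprime_split gpos.
move: (gcdn a b) ea eb => g -> ->.
by rewrite !expnMn -muln_gcdl (eqP (coprimeXl _ (coprimeXr _ cab))) mul1n.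
Qed.

Lemma coprime_sqr x y : coprime (x ^ 2) (y ^ 2) = coprime x y.
Proof. by rewrite coprime_pexpl // coprime_pexpr. Qed.

Lemma coprime_common_dvd d x y : d %| x -> d %| y -> coprime x y -> d = 1.
Proof. by move=> dx dy /eqP c; apply/eqP; rewrite -dvdn1 -c dvdn_gcd dx dy. Qed.

Lemma coprime_odd u v : coprime u v -> odd u || odd v.
Proof.
move=> c; case ou: (odd u) => //; case ov: (odd v) => //.
suff : 2 = 1 by [].
by apply: (coprime_common_dvd _ _ c); rewrite dvdn2 ?ou ?ov.
Qed.

Lemma coprime_mul_sqr x y z : coprime x y -> x * y = z ^ 2 ->
  exists a b, x = a ^ 2 /\ y = b ^ 2.
Proof.
have factor_sqr x' y' : coprime x' y' -> x' * y' = z ^ 2 -> x' = gcdn x' z ^ 2.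
  move=> c e; rewrite -gcdn_sqr -e expnS expn1 -muln_gcdr.
  by rewrite (eqP c) muln1.
move=> c e; exists (gcdn x z), (gcdn y z); split; first exact: factor_sqr _ _ c e.
by apply: (factor_sqr y x); [rewrite coprime_sym | rewrite mulnC].
Qed.

Lemma coprime_mul_fourth x y t : coprime x y -> x * y = t ^ 4 ->
  exists a b, [/\ x = a ^ 4, y = b ^ 4, t = a * b & coprime a b].
Proof.
move=> c e.
have e2 : x * y = (t ^ 2) ^ 2 by rewrite e -expnM.
have [a1 [b1 [ea eb]]] := coprime_mul_sqr c e2.
have e1 : a1 * b1 = t ^ 2 by apply: sqrn_inj; rewrite expnMn -ea -eb.
have c1 : coprime a1 b1 by rewrite -coprime_sqr -ea -eb.
have [a [b [ea1 eb1]]] := coprime_mul_sqr c1 e1.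
exists a, b; split.
- by rewrite ea ea1 -expnM.
- by rewrite eb eb1 -expnM.
- by apply: sqrn_inj; rewrite expnMn -ea1 -eb1.
- by rewrite -coprime_sqr -ea1 -eb1.
Qed.

(* An integer that is the square of a rational is the square of an integer. *)
Lemma rational_sqr_nat n x m : 0 < n -> n ^ 2 * x = m ^ 2 -> exists k, x = k ^ 2.
Proof.
move=> n0 e.
have /dvdnP[k em] : n %| m by rewrite -(dvdn_pexp2r _ _ (isT : 0 < 2)) -e dvdn_mulr.
exists k; apply/eqP; rewrite -(eqn_pmul2l (_ : 0 < n ^ 2)) ?expn_gt0 ?n0 //.
by rewrite e em expnMn mulnC.
Qed.

End CoprimeSquares.

Section QuarticDescent.

Lemma sqr_mod4 x : x ^ 2 %% 4 = odd x.
Proof.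
rewrite -modnXm -(odd_mod x (erefl : odd 4 = false)).
have : x %% 4 < 4 by rewrite ltn_mod.
by case: (x %% 4) => [|[|[|[|//]]]].
Qed.

Lemma fourth_mod8 x : x ^ 4 %% 8 = odd x.
Proof.
rewrite -modnXm -(odd_mod x (erefl : odd 8 = false)).
have : x %% 8 < 8 by rewrite ltn_mod.
by case: (x %% 8) => [|[|[|[|[|[|[|[|//]]]]]]]].
Qed.

Lemma odd_sqr_mod8 u : odd u -> u ^ 2 %% 8 = 1.
Proof.
rewrite -modnXm -(odd_mod u (erefl : odd 8 = false)).
have : u %% 8 < 8 by rewrite ltn_mod.
by case: (u %% 8) => [|[|[|[|[|[|[|[|//]]]]]]]].
Qed.

(* For u, v both odd, u^4 + u^2 v^2 + v^4 is 3 modulo 4, hence not a square. *)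
Lemma quartic_odd_odd u v w : odd u -> odd v -> u ^ 4 + u ^ 2 * v ^ 2 + v ^ 4 <> w ^ 2.
Proof.
have mod4 x : x ^ 4 %% 4 = odd x by rewrite (_ : x ^ 4 = (x ^ 2) ^ 2) ?sqr_mod4 ?oddX // -expnM.
move=> ou ov e.
have : (u ^ 4 + u ^ 2 * v ^ 2 + v ^ 4) %% 4 = w ^ 2 %% 4 by rewrite e.
rewrite -modnDm -(modnDm (u ^ 4)) !mod4 -expnMn !sqr_mod4 oddM ou ov.
by case: (odd w).
Qed.

Lemma same_parity_half m n : n <= m -> odd m = odd n -> m = n + 2 * (m - n)./2.
Proof.
move=> nm omn; have := odd_double_half (m - n).
by rewrite oddB // omn addbb add0n -muln2; lia.
Qed.

Lemma sqr_gap w s K : odd w = odd s -> w ^ 2 = s ^ 2 + 4 * K ->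
  exists A, w = s + 2 * A /\ A * (A + s) = K.
Proof.
move=> ows e.
have sw : s <= w by rewrite -leq_sqr e leq_addr.
have wA := same_parity_half sw ows; set A := (w - s)./2 in wA.
by exists A; split; [|move: e; rewrite wA; lia].
Qed.

(* gcd (u^2 + 2 t^2, t) = gcd (u^2, t). *)
Lemma coprime_sqr_add u t : coprime u t -> coprime (u ^ 2 + 2 * t ^ 2) t.
Proof.
move=> cut; have -> : u ^ 2 + 2 * t ^ 2 = (2 * t) * t + u ^ 2 by lia.
by rewrite coprime_sym /coprime gcdnMDl -/(coprime t (u ^ 2)) coprime_pexpr // coprime_sym.
Qed.

Lemma coprime_gap u t A : coprime u t ->
  A * (A + (u ^ 2 + 2 * t ^ 2)) = 3 * t ^ 4 -> coprime A (A + (u ^ 2 + 2 * t ^ 2)).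
Proof.
set s := u ^ 2 + 2 * t ^ 2 => cut e.
have cst : coprime s t by exact: coprime_sqr_add.
set g := gcdn A (A + s).
have gA : g %| A by exact: dvdn_gcdl.
have gs : g %| s by rewrite -(dvdn_addr _ gA) dvdn_gcdr.
have g3 : g %| 3.
  have : g %| 3 * t ^ 4 by rewrite -e dvdn_mulr.
  by rewrite Gauss_dvdl // coprimeXr // (coprime_dvdl gs cst).
have n3g : ~~ (3 %| g).
  apply/negP => h3.
  have h3A : 3 %| A + s by apply: dvdn_trans h3 (dvdn_gcdr _ _).
  have : 3 * 3 %| 3 * t ^ 4 by rewrite -e dvdn_mul // (dvdn_trans h3 gA).
  rewrite dvdn_pmul2l // Euclid_dvdX // andbT => h3t.
  have : 3 %| gcdn s t by rewrite dvdn_gcd h3t (dvdn_trans h3 gs).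
  by rewrite (eqP cst).
case: (eqVneq g 1) => [/eqP //|g1].
by move: n3g; rewrite (prime_nt_dvdP (isT : prime 3) g1 g3) dvdnn.
Qed.

(* One branch of the descent is excluded modulo 8. *)
Lemma descent_branch_mod8 a b u : coprime a b -> odd u ->
  u ^ 2 + 2 * (a * b) ^ 2 + a ^ 4 <> 3 * b ^ 4.
Proof.
move=> cab ou e.
have h2 : (2 * (a * b) ^ 2) %% 8 = 2 * (odd a && odd b).
  by rewrite (_ : 8 = 2 * 4) // -muln_modr sqr_mod4 oddM.
have : (u ^ 2 + 2 * (a * b) ^ 2 + a ^ 4) %% 8 = (3 * b ^ 4) %% 8 by rewrite e.
rewrite -modnDm -(modnDm (u ^ 2)) h2 odd_sqr_mod8 // fourth_mod8 -modnMm fourth_mod8.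
by move: (coprime_odd cab); case: (odd a); case: (odd b).
Qed.

(* From Q^2 = 3P^2 + u^2 + 2PQ: (Q + P)(Q - 3P) = u^2 with coprime odd factors. *)
Lemma branch_squares P Q u : coprime P Q -> odd u ->
  Q ^ 2 = 3 * P ^ 2 + u ^ 2 + 2 * P * Q ->
  exists c d, [/\ Q + P = c ^ 2, Q = d ^ 2 + 3 * P, odd c & odd d].
Proof.
move=> cPQ ou e.
have u0 : 0 < u by rewrite lt0n; apply: contraTneq ou => ->.
have u2 : 0 < u ^ 2 by rewrite expn_gt0 u0.
have PQ : 3 * P < Q by rewrite ltnNge; apply/negP => h; nia.
set Y := Q - 3 * P; set X := Q + P.
have eQ : Q = Y + 3 * P by rewrite /Y subnK // ltnW.
have XY : X * Y = u ^ 2 by rewrite /X; nia.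
have /andP[oX oY] : odd X && odd Y by rewrite -oddM XY oddX ou orbT.
have cXY : coprime X Y.
  set g := gcdn X Y.
  have [gX gY] : g %| X /\ g %| Y by rewrite dvdn_gcdl dvdn_gcdr.
  have c4 : coprime g 4.
    rewrite (_ : 4 = 2 ^ 2) // coprime_pexpr // coprimen2.
    by apply: contraLR oX; rewrite -!dvdn2 => g2; apply: dvdn_trans g2 gX.
  have e4P : 4 * P = X - Y by rewrite /X; lia.
  have e4Q : 4 * Q = 3 * X + Y by rewrite /X; lia.
  have gP : g %| P by rewrite -(Gauss_dvdr _ c4) e4P dvdn_sub.
  have gQ : g %| Q by rewrite -(Gauss_dvdr _ c4) e4Q dvdn_add ?dvdn_mull.
  exact/eqP/(coprime_common_dvd gP gQ cPQ).
have [c [d [eX eY]]] := coprime_mul_sqr cXY XY.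
exists c, d; split; first by rewrite -eX.
- by rewrite -eY.
- by move: oX; rewrite eX oddX.
- by move: oY; rewrite eY oddX.
Qed.

(* Halving c + d and c - d turns the branch squares into a smaller solution. *)
Lemma branch_descent a Q c d : 0 < a -> coprime (a ^ 2) Q -> odd c -> odd d ->
  Q + a ^ 2 = c ^ 2 -> Q = d ^ 2 + 3 * a ^ 2 ->
  exists e f, [/\ 0 < e, 0 < f, coprime e f & e ^ 4 + e ^ 2 * f ^ 2 + f ^ 4 = Q].
Proof.
move=> a0 cPQ oc od eX eY.
have a2 : 0 < a ^ 2 by rewrite expn_gt0 a0.
have dc : d <= c by rewrite -leq_sqr -eX eY; lia.
have cF := same_parity_half dc (etrans oc (esym od)); set F := (c - d)./2 in cF.
set E := d + F.
have EF : E * F = a ^ 2 by rewrite /E; move: eX; rewrite eY cF; lia.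
have QEF : Q = E * E + E * F + F * F by rewrite /E; lia.
have cEF : coprime E F.
  set h := gcdn E F.
  have [hE hF] : h %| E /\ h %| F by rewrite dvdn_gcdl dvdn_gcdr.
  have hP : h %| a ^ 2 by rewrite -EF dvdn_mulr.
  have hQ : h %| Q by rewrite QEF !dvdn_add ?dvdn_mulr.
  exact/eqP/(coprime_common_dvd hP hQ cPQ).
have [e [f [eE eF]]] := coprime_mul_sqr cEF EF.
have F0 : 0 < F by apply: contraTT a2; rewrite -leqNgt leqn0 -EF => /eqP->; rewrite muln0.
exists e, f; split.
- by rewrite -sqrn_gt0 -eE /E addn_gt0 F0 orbT.
- by rewrite -sqrn_gt0 -eF.
- by rewrite -coprime_sqr -eE -eF.
- by rewrite QEF eE eF; lia.
Qed.

(* With s = u^2 + 2t^2 we have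
   w^2 = s^2 + 12 t^4, so w = s + 2A with A (A + s) = 3 t^4 and coprime factors;
   3 | A + s is excluded modulo 8 and 3 | A leads to branch_descent. *)
Lemma descent_step u v w : 0 < v -> coprime u v -> odd u -> ~~ odd v ->
  u ^ 4 + u ^ 2 * v ^ 2 + v ^ 4 = w ^ 2 ->
  exists e f b, [/\ 0 < e, 0 < f, coprime e f,
                    e ^ 4 + e ^ 2 * f ^ 2 + f ^ 4 = b ^ 2 & b < w].
Proof.
move=> v0 cuv ou ev ew.
have vt : v = 2 * v./2 by have := odd_double_half v; rewrite (negbTE ev) -muln2; lia.
set t := v./2 in vt; have t0 : 0 < t by lia.
have cut : coprime u t by apply: coprime_dvdr cuv; rewrite vt dvdn_mull.
set s := u ^ 2 + 2 * t ^ 2.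
have ews : w ^ 2 = s ^ 2 + 4 * (3 * t ^ 4) by rewrite -ew vt /s; lia.
have ows : odd w = odd s.
  by have := congr1 odd ews; rewrite oddD !oddX !oddM /= addbF.
have [A [wA eA]] := sqr_gap ows ews.
have cA := coprime_gap cut eA.
have : 3 %| A * (A + s) by rewrite eA dvdn_mulr.
rewrite Euclid_dvdM // => /orP[/dvdnP[A' eA'] | /dvdnP[B' eB']]; last first.
  have eAB : A * B' = t ^ 4 by move: eA; rewrite eB'; lia.
  have cAB' : coprime A B' by apply: coprime_dvdr cA; rewrite eB' dvdn_mulr.
  have [a [b [ea eb et cab]]] := coprime_mul_fourth cAB' eAB.
  by exfalso; apply: (descent_branch_mod8 cab ou); move: eB'; rewrite /s ea eb et; lia.
have eAB : A' * (A + s) = t ^ 4 by move: eA; rewrite {1}eA'; lia.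
have cAB' : coprime A' (A + s) by apply: coprime_dvdl cA; rewrite eA' dvdn_mulr.
have [a [b [ea eb et cab]]] := coprime_mul_fourth cAB' eAB.
have a0 : 0 < a by move: t0; rewrite et muln_gt0 => /andP[].
have cab2 : coprime (a ^ 2) (b ^ 2) by rewrite coprime_sqr.
have eQ : (b ^ 2) ^ 2 = 3 * (a ^ 2) ^ 2 + u ^ 2 + 2 * a ^ 2 * b ^ 2.
  by move: eb; rewrite eA' /s ea et -!expnM expnMn /=; clear; lia.
have [c [d [eX eY oc od]]] := branch_squares cab2 ou eQ.
have [e [f [e0 f0 cef ef]]] := branch_descent a0 cab2 oc od eX eY.
exists e, f, b; split => //.
have bt : b <= t by rewrite et leq_pmull.
have tt : t <= t ^ 2 by rewrite -{1}(expn1 t) leq_pexp2l.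
by move: t0 bt tt; rewrite wA /s; clear; lia.
Qed.

Lemma quartic_not_square w : forall u v, 0 < u -> 0 < v -> coprime u v ->
  u ^ 4 + u ^ 2 * v ^ 2 + v ^ 4 <> w ^ 2.
Proof.
elim/ltn_ind: w => w IH u v u0 v0 cuv ew.
case ou: (odd u); case ov: (odd v).
- exact: quartic_odd_odd ou ov ew.
- have [e [f [b [e0 f0 cef eb bw]]]] := descent_step v0 cuv ou (negbT ov) ew.
  exact: IH b bw e f e0 f0 cef eb.
- have e2 : v ^ 4 + v ^ 2 * u ^ 2 + u ^ 4 = w ^ 2 by rewrite -ew; lia.
  have cvu : coprime v u by rewrite coprime_sym.
  have [e [f [b [e0 f0 cef eb bw]]]] := descent_step u0 cvu ov (negbT ou) e2.
  exact: IH b bw e f e0 f0 cef eb.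
- by move: (coprime_odd cuv); rewrite ou ov.
Qed.

Theorem equilateral_form_not_square p q m : 0 < p -> 0 < q ->
  p * q * (p ^ 2 + p * q + q ^ 2) <> m ^ 2.
Proof.
move=> p0 q0 e.
have gpos : 0 < gcdn p q by rewrite gcdn_gt0 p0.
have [p' [q' [ep eq' cpq]]] := gcdn_coprime_split gpos.
move: (gcdn p q) gpos ep eq' => g g0 ep eq'.
have p'0 : 0 < p' by move: p0; rewrite ep muln_gt0 => /andP[].
have q'0 : 0 < q' by move: q0; rewrite eq' muln_gt0 => /andP[].
set S := p' ^ 2 + p' * q' + q' ^ 2.
have e2 : (g ^ 2) ^ 2 * (p' * q' * S) = m ^ 2 by rewrite -e ep eq' /S; lia.
have g2 : 0 < g ^ 2 by rewrite expn_gt0 g0.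
have [k ek] := rational_sqr_nat g2 e2.
have cS : coprime (p' * q') S.
  rewrite coprimeMl /S; apply/andP; split.
  - rewrite (_ : _ + _ = (p' + q') * p' + q' ^ 2); last by lia.
    by rewrite /coprime gcdnMDl -/(coprime p' (q' ^ 2)) coprimeXr.
  - rewrite (_ : _ + _ = (p' + q') * q' + p' ^ 2); last by lia.
    by rewrite /coprime gcdnMDl -/(coprime q' (p' ^ 2)) coprimeXr // coprime_sym.
have [h [j [eh ej]]] := coprime_mul_sqr cS ek.
have [u [v [eu ev]]] := coprime_mul_sqr cpq eh.
apply: (quartic_not_square (w := j) (u := u) (v := v)).
- by rewrite -sqrn_gt0 -eu.
- by rewrite -sqrn_gt0 -ev.
- by rewrite -coprime_sqr -eu -ev.
- by rewrite -ej /S eu ev; lia.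
Qed.

End QuarticDescent.

Section HyperboloidGeometry.
Local Open Scope R_scope.

Lemma mink_sym p q : mink p q = mink q p.
Proof. rewrite /mink; ring. Qed.

Lemma hyperboloid_height p : on_hyperboloid p ->
  pz p * pz p = 1 + px p * px p + py p * py p.
Proof. by rewrite /on_hyperboloid /mink => -[hp _]; lra. Qed.

Lemma lagrange_identity x y x' y' :
  (1 + x * x + y * y) * (1 + x' * x' + y' * y')
  = (1 + x * x' + y * y') ^ 2 + (x - x') ^ 2 + (y - y') ^ 2 + (x * y' - x' * y) ^ 2.
Proof. ring. Qed.

Lemma mink_le_neg1 p q : on_hyperboloid p -> on_hyperboloid q -> mink p q <= -1.
Proof.
move=> hp hq.
have zz : 0 < pz p * pz q by apply: Rmult_lt_0_compat; [case: hp | case: hq].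
have Z2 := lagrange_identity (px p) (py p) (px q) (py q).
rewrite -(hyperboloid_height hp) -(hyperboloid_height hq) in Z2.
have := pow2_ge_0 (px p - px q); have := pow2_ge_0 (py p - py q).
have := pow2_ge_0 (px p * py q - px q * py p).
rewrite /mink; nra.
Qed.

Lemma mink_eq_neg1 p q : on_hyperboloid p -> on_hyperboloid q -> mink p q = -1 -> p = q.
Proof.
move=> hp hq e.
have Z2 := lagrange_identity (px p) (py p) (px q) (py q).
rewrite -(hyperboloid_height hp) -(hyperboloid_height hq) in Z2.
have ez : pz p * pz q = 1 + px p * px q + py p * py q by move: e; rewrite /mink; lra.
have := pow2_ge_0 (px p - px q); have := pow2_ge_0 (py p - py q).
have := pow2_ge_0 (px p * py q - px q * py p) => s1 s2 s3.
have ex : px p = px q by nra.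
have ey : py p = py q by nra.
have ezz : pz p = pz q.
  have := hyperboloid_height hp; have := hyperboloid_height hq.
  case: hp => _ zp; case: hq => _ zq; rewrite ex ey; nra.
by case: p q ex ey ezz {hp hq e Z2 ez s1 s2 s3} => ? ? ? [? ? ?] /= -> -> ->.
Qed.

Lemma nondegenerate_mink A B C : on_hyperboloid A -> on_hyperboloid B ->
  nondegenerate A B C -> mink A B < -1.
Proof.
move=> hA hB nd; case: (Rle_lt_or_eq_dec _ _ (mink_le_neg1 hA hB)) => // e.
by exfalso; apply: nd; rewrite (mink_eq_neg1 hA hB e) /det3; ring.
Qed.

Lemma exp_arcosh t : 1 <= t -> exp (arcosh t) = t + sqrt (t * t - 1).
Proof. by move=> t1; rewrite /arcosh exp_ln //; have := sqrt_pos (t * t - 1); lra. Qed.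

Lemma cosh_arcosh t : 1 <= t -> (exp (arcosh t) + / exp (arcosh t)) / 2 = t.
Proof.
move=> t1; rewrite exp_arcosh //.
have ss : sqrt (t * t - 1) * sqrt (t * t - 1) = t * t - 1 by apply: sqrt_sqrt; nra.
have := sqrt_pos (t * t - 1) => s0.
by field_simplify_eq; [nra | lra].
Qed.

Lemma cosh_hdist p q : on_hyperboloid p -> on_hyperboloid q ->
  (exp (hdist p q) + / exp (hdist p q)) / 2 = - mink p q.
Proof. by move=> hp hq; apply: cosh_arcosh; have := mink_le_neg1 hp hq; lra. Qed.

Lemma tangent_mink p q r : mink p p = -1 ->
  mink (tangent p q) (tangent p r) = mink q r + mink p q * mink p r.
Proof.
move=> hp.
have -> : mink (tangent p q) (tangent p r)
  = mink q r + 2 * mink p q * mink p r + mink p q * mink p r * mink p p.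
  by rewrite /tangent /mink /=; ring.
by rewrite hp; ring.
Qed.

Lemma hangle_regular p q r c : mink p p = -1 -> mink q q = -1 -> mink r r = -1 ->
  1 < c -> mink p q = - c -> mink p r = - c -> mink q r = - c ->
  hangle p q r = acos (c / (c + 1)).
Proof.
move=> hp hq hr c1 epq epr eqr.
rewrite /hangle /= !tangent_mink // epq epr eqr hq hr.
have -> : -1 + - c * - c = c * c - 1 by ring.
rewrite sqrt_sqrt; last nra.
by congr acos; field; split; nra.
Qed.

Lemma sin_regular_angle E c : 0 < E -> c = (E + / E) / 2 ->
  sin (acos (c / (c + 1))) ^ 2 * (E + 1) ^ 4 = 4 * E * (E * E + E + 1).
Proof.
move=> E0 ec.
have c0 : 0 < c by rewrite ec; have := Rinv_0_lt_compat _ E0; lra.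
have x0 : 0 < c / (c + 1) by apply: Rdiv_lt_0_compat; lra.
have x1 : c / (c + 1) < 1 by apply: (Rmult_lt_reg_r (c + 1)); [lra | field_simplify; lra].
rewrite sin_acos; last lra.
rewrite pow2_sqrt; last by rewrite /Rsqr; nra.
by rewrite /Rsqr ec; field; split; nra.
Qed.

End HyperboloidGeometry.

Section RationalityBridge.
Local Open Scope R_scope.

Lemma INR_muln m n : INR (m * n)%N = INR m * INR n.
Proof. exact: mult_INR. Qed.

Lemma INR_addn m n : INR (m + n)%N = INR m + INR n.
Proof. exact: plus_INR. Qed.

Lemma INR_expn m n : INR (m ^ n)%N = INR m ^ n.
Proof. by elim: n => [|n IH] //=; rewrite expnS INR_muln IH. Qed.

Lemma pos_rat_frac E : 0 < E -> is_rat E ->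
  exists P Q : nat, [/\ (0 < P)%N, (0 < Q)%N & E = INR P / INR Q].
Proof.
move=> E0 [[a b] eE]; rewrite eE /Q2R /= in E0 *.
have b0 : 0 < IZR (Z.pos b) by apply: IZR_lt; lia.
have a0 : (0 < a)%Z.
  apply: lt_IZR; apply: (Rmult_lt_reg_r (/ IZR (Z.pos b))); first exact: Rinv_0_lt_compat.
  by rewrite Rmult_0_l.
exists (Z.to_nat a), (Pos.to_nat b); split; [lia | lia |].
by rewrite !INR_IZR_INZ Z2Nat.id ?positive_nat_Z; [|lia].
Qed.

Lemma rat_sqr_frac S : is_rat S ->
  exists C D : nat, (0 < D)%N /\ S ^ 2 = (INR C / INR D) ^ 2.
Proof.
move=> [[a b] ->]; exists (Z.abs_nat a), (Pos.to_nat b); split; first lia.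
rewrite /Q2R /= !INR_IZR_INZ Zabs2Nat.id_abs positive_nat_Z abs_IZR /Rdiv.
have sqr_abs : IZR a * IZR a = Rabs (IZR a) * Rabs (IZR a) by apply: Rsqr_abs.
transitivity (IZR a * IZR a * (/ IZR (Z.pos b) * / IZR (Z.pos b))); first ring.
by rewrite sqr_abs; ring.
Qed.

Lemma regular_sine_irrational E S : 0 < E -> is_rat E -> is_rat S ->
  S ^ 2 * (E + 1) ^ 4 <> 4 * E * (E * E + E + 1).
Proof.
move=> E0 ratE ratS e.
have [P [Q [P0 Q0 eE]]] := pos_rat_frac E0 ratE; rewrite {}eE in e.
have [C [D [D0 eS]]] := rat_sqr_frac ratS.
have nat_eq : ((2 * D) ^ 2 * (P * Q * (P ^ 2 + P * Q + Q ^ 2)) = (C * (P + Q) ^ 2) ^ 2)%N.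
  apply: INR_eq; rewrite !(INR_muln, INR_addn, INR_expn) /=.
  have [Qr Dr] : INR Q <> 0 /\ INR D <> 0 by split; apply: not_0_INR; lia.
  transitivity (INR D ^ 2 * INR Q ^ 4 * (4 * (INR P / INR Q)
                 * (INR P / INR Q * (INR P / INR Q) + INR P / INR Q + 1))); first by field.
  by rewrite -e eS; field.
have D2 : (0 < 2 * D)%N by rewrite muln_gt0.
have [k ek] := rational_sqr_nat D2 nat_eq.
exact: equilateral_form_not_square P0 Q0 ek.
Qed.

End RationalityBridge.

Open Scope R_scope.

Theorem proposition4p1 :
  ~ (exists A B C : pt3,
        on_hyperboloid A /\ on_hyperboloid B /\ on_hyperboloid C /\
        nondegenerate A B C /\ equilateral A B C /\ heron_triangle A B C).
Proof.
move=> [A [B [C [hA [hB [hC [nd [[eBC eCA] heron]]]]]]]].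
move: heron; rewrite /heron_triangle => -[_ [_ [ratE [[_ ratS] _]]]].
set E := exp (hdist A B) in ratE.
set c := (E + / E) / 2.
have cosh_side : forall p q, on_hyperboloid p -> on_hyperboloid q ->
    hdist p q = hdist A B -> mink p q = - c.
  by move=> p q hp hq d; rewrite /c /E -d (cosh_hdist hp hq); ring.
have c1 : 1 < c by have := nondegenerate_mink hA hB nd; rewrite cosh_side //; lra.
have angle : hangle A B C = acos (c / (c + 1)).
  apply: hangle_regular; [exact: proj1 hA | exact: proj1 hB | exact: proj1 hC | exact: c1
    | exact: cosh_side hA hB _ | | exact: cosh_side hB hC (etrans eBC eCA)].
  by rewrite mink_sym; exact: cosh_side hC hA eCA.
have E0 : 0 < E by apply: exp_pos.
apply: (regular_sine_irrational E0 ratE ratS).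
by rewrite angle; apply: sin_regular_angle.
Qed.
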